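(* Let $n\geq 2$ and let $[n]=U\sqcup A$ be a partition with $U=\{i_1<i_2<\cdots<i_L\}$ nonempty. Let $\bar x_1,\dots,\bar x_n,\bar y_1,\dots,\bar y_n\in\mathbb{R}^3$ be given. Consider the problem \[ \min \sum_{i=1}^{n-1} \left(\|x_i - x_{i+1}\|^2 + \|y_i - y_{i+1}\|^2\right), \] where $(x_i,y_i)=(\bar x_i,\bar y_i)$ is fixed for $i\in U$, and for each $i\in A$ the variable $(x_i,y_i)$ ranges over $\{(\bar x_i,\bar y_i),(\bar y_i,\bar x_i)\}$. Encode a feasible point by signs $s_i\in\{1,-1\}$, where $s_i=1$ if $(x_i,y_i)=(\bar x_i,\bar y_i)$ and $s_i=-1$ if $(x_i,y_i)=(\bar y_i,\bar x_i)$ (so $s_i=1$ for $i\in U$), and set $w_{i,i+1}=(\bar x_i-\bar y_i)^T(\bar x_{i+1}-\bar y_{i+1})$ for $1\le i\le n-1$. Put $i_0:=1$ and $i_{L+1}:=n$. Then an optimal solution $s^*$ of this problem is obtained as follows, where $\operatorname{sgn}$ is the sign function and $\operatorname{sgn}(0)$ may be taken to be either $1$ or $-1$: (1) For the last chunk ($\ell=L$): $s^*_{i_\ell}=1$ and $s^*_{i+1}=\operatorname{sgn}(w_{i,i+1})s^*_i$ for $i=i_\ell,i_\ell+1,\dots,i_{\ell+1}-1$. (2) For the first chunk ($\ell=0$): $s^*_{i_{\ell+1}}=1$ and $s^*_i=\operatorname{sgn}(w_{i,i+1})s^*_{i+1}$ for $i=i_{\ell+1}-1,i_{\ell+1}-2,\dots,i_\ell$.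 (3) For any other chunk ($1\le \ell\le L-1$): let $k$ be an index with $i_\ell\le k\le i_{\ell+1}-1$ minimizing $|w_{k,k+1}|$. Then $s^*_{i_\ell}=1$ and $s^*_{i+1}=\operatorname{sgn}(w_{i,i+1})s^*_i$ for $i=i_\ell,i_\ell+1,\dots,k-1$; and $s^*_{i_{\ell+1}}=1$ and $s^*_i=\operatorname{sgn}(w_{i,i+1})s^*_{i+1}$ for $i=i_{\ell+1}-1,i_{\ell+1}-2,\dots,k+1$.
   Context: This is the symmetry-breaking (''clustering'') step for estimated pairs of homologous bead positions $(\bar x_i,\bar y_i)$, $i=1,\dots,n$: pairs indexed by $U$ are unambiguous (fixed order), pairs indexed by $A$ are ambiguous (may be swapped). The $\ell$-th chunk consists of the indices from $i_\ell$ to $i_{\ell+1}$, and the objective splits as a sum over chunks of $\sum_{i=i_\ell}^{i_{\ell+1}-1}\left(\|x_i - x_{i+1}\|^2 + \|y_i - y_{i+1}\|^2\right)$. *)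

(* Indices are 1-based naturals 1..n, as in the paper. *)
From HB Require Import structures.
From mathcomp Require Import all_boot all_order all_algebra.
From mathcomp Require Import reals.
Set Implicit Arguments. Unset Strict Implicit. Unset Printing Implicit Defensive.
Import Order.TTheory GRing.Theory Num.Theory.
Local Open Scope ring_scope.

Section Defs.
Variable R : realType.

Definition dot3 (a b : 'rV[R]_3) : R := \sum_(j < 3) a 0 j * b 0 j.
Definition sqnorm3 (a : 'rV[R]_3) : R := dot3 a a.

Definition xpt (xb yb : nat -> 'rV[R]_3) (s : nat -> R) (i : nat) :=
  if s i == 1 then xb i else yb i.
Definition ypt (xb yb : nat -> 'rV[R]_3) (s : nat -> R) (i : nat) :=
  if s i == 1 then yb i else xb i.

Definition objective (n : nat) (xb yb : nat -> 'rV[R]_3) (s : nat -> R) : R :=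
  \sum_(1 <= i < n)
     (sqnorm3 (xpt xb yb s i - xpt xb yb s i.+1)
      + sqnorm3 (ypt xb yb s i - ypt xb yb s i.+1)).

Definition feasible (n : nat) (u : seq nat) (s : nat -> R) : Prop :=
  (forall i, (1 <= i <= n)%N -> s i = 1 \/ s i = -1) /\
  (forall i, i \in u -> s i = 1).

Definition wgt (xb yb : nat -> 'rV[R]_3) (i : nat) : R :=
  dot3 (xb i - yb i) (xb i.+1 - yb i.+1).

(* Breakpoints: i_0 = 1, i_l = l-th element of U (l = 1..L), i_{L+1} = n,
   where u lists U in increasing order and L = size u. *)
Definition brk (n : nat) (u : seq nat) (l : nat) : nat :=
  if l == 0%N then 1%N
  else if (l <= size u)%N then nth 0%N u l.-1 else n.

Definition constructed (n : nat) (u : seq nat) (xb yb : nat -> 'rV[R]_3)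
    (sg : R -> R) (s : nat -> R) : Prop :=
  let L := size u in
  let ib := brk n u in
  let w := wgt xb yb in
  (s (ib L) = 1 /\
   forall i, (ib L <= i < ib L.+1)%N -> s i.+1 = sg (w i) * s i) /\
  (s (ib 1%N) = 1 /\
   forall i, (ib 0%N <= i < ib 1%N)%N -> s i = sg (w i) * s i.+1) /\
  (forall l, (1 <= l < L)%N ->
     exists k, (ib l <= k < ib l.+1)%N /\
       (forall j, (ib l <= j < ib l.+1)%N -> `|w k| <= `|w j|) /\
       s (ib l) = 1 /\
       (forall i, (ib l <= i < k)%N -> s i.+1 = sg (w i) * s i) /\
       s (ib l.+1) = 1 /\
       (forall i, (k.+1 <= i < ib l.+1)%N -> s i = sg (w i) * s i.+1)).

End Defs.

From HB Require Import structures.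
From mathcomp Require Import all_boot all_order all_algebra.
From mathcomp Require Import reals ring lra zify.
Import Order.TTheory GRing.Theory Num.Theory.
Local Open Scope ring_scope.

Set Implicit Arguments.
Unset Strict Implicit.
Unset Printing Implicit Defensive.

(* Expanding the squares, the cost of the edge (i, i+1) plus
   s_i s_(i+1) w_(i,i+1) does not depend on the signs, so minimizing the
   objective amounts to maximizing the coupling sum_i s_i s_(i+1) w_(i,i+1).
   The indices of U, where the sign is fixed to 1, cut this sum into chunks
   that are optimized independently.  Each term is at most |w_(i,i+1)|, with
   equality when s_(i+1) = sgn(w_(i,i+1)) s_i.  In the first and last chunks
   only one end is fixed, and propagating this rule from it is tight on every
   edge.  In a middle chunk both ends are fixed; propagating from both ends
   towards the lightest edge k loses at most 2|w_k|, whereas any other sign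
   vector either loses 2|w_j| >= 2|w_k| on some edge j, or is tight everywhere
   and then, unless w_k = 0, is forced to coincide with the construction. *)

Lemma nat_range_ind (P : nat -> Prop) a b :
  P a -> (forall i, (a <= i < b)%N -> P i -> P i.+1) ->
  forall j, (a <= j <= b)%N -> P j.
Proof.
move=> Pa PS; elim=> [|j IH] ajb; first by move: Pa; have -> : a = 0%N by lia.
have [<- //|aj] := eqVneq a j.+1.
by apply: PS; [lia | apply: IH; lia].
Qed.

Lemma nat_range_rev_ind (P : nat -> Prop) a b :
  P b -> (forall i, (a <= i < b)%N -> P i.+1 -> P i) ->
  forall j, (a <= j <= b)%N -> P j.
Proof.
move=> Pb PS j ajb; move jb: (b - j)%N => d.
elim: d j ajb jb => [|d IH] j ajb jb; first by have -> : j = b by lia.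
by apply: PS; [lia | apply: IH; lia].
Qed.

Lemma nat_chunk_cover (c : nat -> nat) m i :
  (c 0 <= i <= c m.+1)%N -> exists2 l, (l <= m)%N & (c l <= i <= c l.+1)%N.
Proof.
elim: m => [|m IH] im; first by exists 0%N.
have [ic|ci] := leqP i (c m.+1); last by exists m.+1 => //; lia.
by have [l lm cli] := IH ltac:(lia); exists l => //; lia.
Qed.

Lemma big_nat_chunks (V : nmodType) (c : nat -> nat) m (F : nat -> V) :
  {homo c : l k / (l <= k)%N} ->
  \sum_(c 0 <= i < c m) F i = \sum_(l < m) \sum_(c l <= i < c l.+1) F i.
Proof.
move=> c_homo; elim: m => [|m IH]; first by rewrite big_ord0 big_geq.
by rewrite big_ord_recr -IH -big_cat_nat ?c_homo.
Qed.

Lemma ler_sum_nat_gap (R : numDomainType) (F G : nat -> R) a b k c :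
  (a <= k < b)%N -> (forall i, (a <= i < b)%N -> i != k -> F i <= G i) ->
  F k + c <= G k -> \sum_(a <= i < b) F i + c <= \sum_(a <= i < b) G i.
Proof.
move=> kab FG FGk; have k_in : k \in index_iota a b by rewrite mem_index_iota.
rewrite !(bigD1_seq k) ?iota_uniq //= addrAC lerD //.
rewrite big_seq_cond [leRHS]big_seq_cond; apply: ler_sum => i /andP[].
by rewrite mem_index_iota => /FG.
Qed.

Lemma find_eq_nth (T : Type) (a : pred T) (s : seq T) x0 l :
  (l <= size s)%N -> (forall m, (m < l)%N -> ~~ a (nth x0 s m)) ->
  ((l < size s)%N -> a (nth x0 s l)) -> find a s = l.
Proof.
move=> ls before at_l; apply/eqP; rewrite eqn_leq; apply/andP; split.
  rewrite leqNgt; apply/negP => lt_l.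
  by have := before_find x0 lt_l; rewrite at_l //; have := find_size a s; lia.
rewrite leqNgt; apply/negP => lt_find.
have has_a : has a s by rewrite has_find; lia.
by have := before _ lt_find; rewrite nth_find.
Qed.

Lemma norm_eq1 (R : realDomainType) (x : R) : `|x| = 1 <-> x = 1 \/ x = -1.
Proof.
split=> [/eqP|[->|->]]; rewrite ?normrN ?normr1 //.
by rewrite eqr_norml ler01 andbT => /orP[/eqP|/eqP]; [left|right].
Qed.

Lemma sign_mul_self (R : realDomainType) (x : R) : `|x| = 1 -> x * x = 1.
Proof. by move=> /eqP; rewrite -sqr_norm_eq1 expr2 => /eqP. Qed.

Section ArgMin.
Variables (d : Order.disp_t) (T : orderType d) (f : nat -> T).

Definition argmin_step k j := if (f j < f k)%O then j else k.
Definition argmin_nat a b := foldl argmin_step a (index_iota a b).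

Lemma argmin_foldl k s :
  foldl argmin_step k s \in k :: s /\
  forall j, j \in k :: s -> (f (foldl argmin_step k s) <= f j)%O.
Proof.
elim: s k => [|x s IH] k /=; first by split=> [|j]; rewrite ?inE // => /eqP ->.
have [mem_m min_m] := IH (argmin_step k x).
have [le_k le_x] : (f (argmin_step k x) <= f k)%O /\ (f (argmin_step k x) <= f x)%O.
  by rewrite /argmin_step; case: ifP => [/ltW|/negbT]; rewrite -?leNgt; split.
split.
  by move: mem_m; rewrite !inE /argmin_step; case: ifP => _ /orP[->|->]; rewrite ?orbT.
move=> j; rewrite !inE => /or3P[/eqP->|/eqP->|js].
- exact: le_trans (min_m _ (mem_head _ _)) le_k.
- exact: le_trans (min_m _ (mem_head _ _)) le_x.
- by apply: min_m; rewrite inE js orbT.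
Qed.

Lemma argmin_natP a b : (a < b)%N ->
  (a <= argmin_nat a b < b)%N /\
  forall j, (a <= j < b)%N -> (f (argmin_nat a b) <= f j)%O.
Proof.
move=> ab; have [mem_m min_m] := argmin_foldl a (index_iota a b).
rewrite /argmin_nat; split.
  by move: mem_m; rewrite inE mem_index_iota => /orP[/eqP->|//]; rewrite leqnn ab.
by move=> j jab; apply: min_m; rewrite inE mem_index_iota jab orbT.
Qed.

End ArgMin.

Section Breakpoints.
Variables (n : nat) (u : seq nat).

Lemma brkS l : (l < size u)%N -> brk n u l.+1 = nth 0%N u l.
Proof. by rewrite /brk /= => ->. Qed.

Lemma brk_large m : (size u < m)%N -> brk n u m = n.
Proof. by case: m => [//|m] um; rewrite /brk /= ltnNge -ltnS um. Qed.

Lemma brk_mem l : (0 < l <= size u)%N -> brk n u l \in u.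
Proof. by case: l => [//|l] lu; rewrite brkS // mem_nth. Qed.

Lemma brk_of_mem x : x \in u -> exists2 l, (0 < l <= size u)%N & x = brk n u l.
Proof. by move=> /(nthP 0%N) [l lu <-]; exists l.+1; rewrite ?brkS. Qed.

Hypotheses (n_gt0 : (0 < n)%N) (u_range : all (fun i => (1 <= i <= n)%N) u).

Lemma brk_range l : (1 <= brk n u l <= n)%N.
Proof.
case: l => [|l]; first by rewrite /brk /=; lia.
have [lu|ul] := ltnP l (size u).
  by rewrite brkS //; apply: (allP u_range); apply: mem_nth.
by rewrite /brk /=; case: ifP => [lu|_]; lia.
Qed.

Hypothesis u_sorted : sorted ltn u.

Lemma brk_lt l : (0 < l < size u)%N -> (brk n u l < brk n u l.+1)%N.
Proof.
case: l => [//|l] lu; rewrite !brkS; try lia.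
by apply: (sorted_ltn_nth ltn_trans) => //; rewrite inE; lia.
Qed.

Lemma brk_homo : {homo brk n u : l m / (l <= m)%N}.
Proof.
move=> l m; rewrite leq_eqVlt => /orP[/eqP-> //|lm].
case: l lm => [|l] lm; first by have := brk_range m; rewrite /brk /=; lia.
have [um|mu] := ltnP (size u) m.
  by rewrite (brk_large um); have := brk_range l.+1; lia.
case: m lm mu => [//|m] lm mu; rewrite !brkS; try lia.
by apply/ltnW/(sorted_ltn_nth ltn_trans) => //; rewrite inE; lia.
Qed.

Lemma find_brk l i : (l <= size u)%N -> ((0 < l)%N -> (brk n u l <= i)%N) ->
  ((l < size u)%N -> (i < brk n u l.+1)%N) -> find (fun x => i < x)%N u = l.
Proof.
move=> lu li il; apply: (find_eq_nth (x0 := 0%N)) => // [m ml|lu'].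
  rewrite -leqNgt -brkS; last by lia.
  by apply: leq_trans (li _); [apply: brk_homo | lia].
by rewrite -brkS ?il.
Qed.

End Breakpoints.

Section Coupling.
Variables (R : realDomainType) (sg : R -> R) (w : nat -> R).

Definition coupling (s : nat -> R) i := s i * s i.+1 * w i.
Definition forward_rule a b (s : nat -> R) :=
  forall i, (a <= i < b)%N -> s i.+1 = sg (w i) * s i.
Definition backward_rule a b (s : nat -> R) :=
  forall i, (a <= i < b)%N -> s i = sg (w i) * s i.+1.
Definition signs_on a b (s : nat -> R) := forall j, (a <= j <= b)%N -> `|s j| = 1.
Definition sgprod a b := \prod_(a <= m < b) sg (w m).

Lemma sgprodSr a i : (a <= i)%N -> sgprod a i.+1 = sg (w i) * sgprod a i.
Proof. by move=> ai; rewrite /sgprod big_nat_recr // mulrC. Qed.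

Lemma sgprodSl i b : (i < b)%N -> sgprod i b = sg (w i) * sgprod i.+1 b.
Proof. by move=> ib; rewrite /sgprod big_ltn. Qed.

Lemma sgprod_empty a : sgprod a a = 1.
Proof. by rewrite /sgprod big_geq. Qed.

Hypothesis sg_norm : forall t, `|sg t| = 1.

Lemma forward_rule_signs a b s : `|s a| = 1 -> forward_rule a b s -> signs_on a b s.
Proof.
move=> sa fw; apply: nat_range_ind => // i iab si.
by rewrite fw // normrM sg_norm si mulr1.
Qed.

Lemma backward_rule_signs a b s : `|s b| = 1 -> backward_rule a b s -> signs_on a b s.
Proof.
move=> sb bw; apply: nat_range_rev_ind => // i iab si.
by rewrite bw // normrM sg_norm si mulr1.
Qed.

Lemma forward_rule_eq a b s t : forward_rule a b s -> forward_rule a b t ->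
  s a = t a -> forall j, (a <= j <= b)%N -> s j = t j.
Proof.
by move=> fs ft st; apply: nat_range_ind => // i iab sti; rewrite fs // ft // sti.
Qed.

Lemma backward_rule_eq a b s t : backward_rule a b s -> backward_rule a b t ->
  s b = t b -> forall j, (a <= j <= b)%N -> s j = t j.
Proof.
by move=> bs bt st; apply: nat_range_rev_ind => // i iab sti; rewrite bs // bt // sti.
Qed.

Lemma norm_coupling s i : `|s i| = 1 -> `|s i.+1| = 1 -> `|coupling s i| = `|w i|.
Proof. by move=> si si1; rewrite /coupling !normrM si si1 !mul1r. Qed.

Lemma coupling_le s i : `|s i| = 1 -> `|s i.+1| = 1 -> coupling s i <= `|w i|.
Proof. by move=> si si1; rewrite -(norm_coupling si si1) ler_norm. Qed.

Hypothesis sg_mul : forall t, sg t * t = `|t|.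

Lemma coupling_forward s i :
  `|s i| = 1 -> s i.+1 = sg (w i) * s i -> coupling s i = `|w i|.
Proof.
by move=> si e; rewrite /coupling e -sg_mul mulrCA (sign_mul_self si) mulr1.
Qed.

Lemma coupling_backward s i :
  `|s i.+1| = 1 -> s i = sg (w i) * s i.+1 -> coupling s i = `|w i|.
Proof.
by move=> si1 e; rewrite /coupling e -sg_mul -(mulrA (sg _)) (sign_mul_self si1) mulr1.
Qed.

Lemma coupling_tight s i : w i != 0 -> `|s i| = 1 -> `|s i.+1| = 1 ->
  coupling s i = `|w i| -> s i.+1 = sg (w i) * s i /\ s i = sg (w i) * s i.+1.
Proof.
move=> wi0 si si1; rewrite -sg_mul /coupling => /(mulIf wi0) ss.
split; first by rewrite -ss mulrAC (sign_mul_self si) mul1r.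
by rewrite -ss -mulrA (sign_mul_self si1) mulr1.
Qed.

Lemma sum_coupling_le a b t : signs_on a b t ->
  \sum_(a <= i < b) coupling t i <= \sum_(a <= i < b) `|w i|.
Proof.
by move=> tab; apply: ler_sum_nat => i iab; apply: coupling_le; apply: tab; lia.
Qed.

Lemma sum_coupling_forward a b s : `|s a| = 1 -> forward_rule a b s ->
  \sum_(a <= i < b) coupling s i = \sum_(a <= i < b) `|w i|.
Proof.
move=> sa fw; have sab := forward_rule_signs sa fw.
by apply: eq_big_nat => i iab; apply: coupling_forward; [apply: sab; lia | exact: fw].
Qed.

Lemma sum_coupling_backward a b s : `|s b| = 1 -> backward_rule a b s ->
  \sum_(a <= i < b) coupling s i = \sum_(a <= i < b) `|w i|.
Proof.
move=> sb bw; have sab := backward_rule_signs sb bw.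
by apply: eq_big_nat => i iab; apply: coupling_backward; [apply: sab; lia | exact: bw].
Qed.

Lemma middle_chunk_signs a b k s : (a <= k < b)%N ->
  s a = 1 -> forward_rule a k s -> s b = 1 -> backward_rule k.+1 b s -> signs_on a b s.
Proof.
move=> kab sa fw sb bw j /andP[aj jb]; have [jk|kj] := leqP j k.
  by apply: (forward_rule_signs _ fw); [rewrite sa normr1 | rewrite aj].
by apply: (backward_rule_signs _ bw); [rewrite sb normr1 | rewrite kj].
Qed.

Lemma middle_chunk_sum_ge a b k s : (a <= k < b)%N ->
  s a = 1 -> forward_rule a k s -> s b = 1 -> backward_rule k.+1 b s ->
  \sum_(a <= i < b) `|w i| - 2 * `|w k| <= \sum_(a <= i < b) coupling s i.
Proof.
move=> kab sa fw sb bw; have sab := middle_chunk_signs kab sa fw sb bw.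
apply: (ler_sum_nat_gap kab) => [i iab ik|].
  have [lt_ik|lt_ki] := ltnP i k.
    by rewrite (coupling_forward (s := s)) //; [apply: sab; lia | apply: fw; lia].
  by rewrite (coupling_backward (s := s)) //; [apply: sab; lia | apply: bw; lia].
have sk_norm : `|coupling s k| = `|w k| by apply: norm_coupling; apply: sab; lia.
by have := ler_norm (- coupling s k); rewrite normrN sk_norm; lra.
Qed.

Lemma sum_coupling_loss a b j t : (a <= j < b)%N -> signs_on a b t ->
  coupling t j != `|w j| ->
  \sum_(a <= i < b) coupling t i + 2 * `|w j| <= \sum_(a <= i < b) `|w i|.
Proof.
move=> jab tab tj.
have tj_norm : `|coupling t j| = `|w j| by apply: norm_coupling; apply: tab; lia.
move/eqP: tj_norm; rewrite eqr_norml (negbTE tj) /= => /andP[/eqP tj_neg _].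
apply: (ler_sum_nat_gap jab) => [i iab _|]; last by rewrite tj_neg; lra.
by apply: coupling_le; apply: tab; lia.
Qed.

Lemma middle_chunk_optimal a b k s t : (a <= k < b)%N ->
  (forall j, (a <= j < b)%N -> `|w k| <= `|w j|) ->
  s a = 1 -> forward_rule a k s -> s b = 1 -> backward_rule k.+1 b s ->
  signs_on a b t -> t a = 1 -> t b = 1 ->
  \sum_(a <= i < b) coupling t i <= \sum_(a <= i < b) coupling s i.
Proof.
move=> kab kmin sa fw sb bw tab ta tb.
have s_sum := middle_chunk_sum_ge kab sa fw sb bw.
(* Either t loses 2|w_j| >= 2|w_k| on some edge j, or it is tight on every
   edge; then w_k = 0, or all weights are nonzero and tightness forces t = s. *)
have [/hasP[j]|/hasPn t_tight] :=
  boolP (has (fun i => coupling t i != `|w i|) (index_iota a b)).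
  rewrite mem_index_iota => jab /(sum_coupling_loss jab tab).
  by have := kmin j jab; lra.
have {}t_tight i : (a <= i < b)%N -> coupling t i = `|w i|.
  by move=> iab; apply/eqP/negPn/t_tight; rewrite mem_index_iota.
have [wk0|wk] := eqVneq (w k) 0.
  by rewrite (eq_big_nat _ _ t_tight); move: s_sum; rewrite wk0 normr0; lra.
have t_rules i : (a <= i < b)%N -> t i.+1 = sg (w i) * t i /\ t i = sg (w i) * t i.+1.
  move=> iab; apply: coupling_tight; rewrite ?t_tight //; try by apply: tab; lia.
  by rewrite -normr_gt0 (lt_le_trans _ (kmin i iab)) // normr_gt0.
have t_fw : forward_rule a k t by move=> i iak; exact: proj1 (t_rules i ltac:(lia)).
have t_bw : backward_rule k.+1 b t by move=> i ikb; exact: proj2 (t_rules i ltac:(lia)).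
have st j : (a <= j <= b)%N -> s j = t j.
  move=> ajb; have [jk|kj] := leqP j k.
    by apply: (forward_rule_eq fw t_fw); [rewrite sa ta | lia].
  by apply: (backward_rule_eq bw t_bw); [rewrite sb tb | lia].
suff -> : \sum_(a <= i < b) coupling t i = \sum_(a <= i < b) coupling s i by [].
by apply: eq_big_nat => i iab; rewrite /coupling (st i) ?(st i.+1) //; lia.
Qed.

End Coupling.

Lemma sign_fun_norm (R : realDomainType) (sg : R -> R) :
  (forall t, 0 < t -> sg t = 1) -> (forall t, t < 0 -> sg t = -1) ->
  (sg 0 = 1 \/ sg 0 = -1) -> forall t, `|sg t| = 1.
Proof.
move=> sg_pos sg_neg sg0 t; apply/norm_eq1.
by case: (ltrgtP t 0) => [/sg_neg|/sg_pos|->]; auto.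
Qed.

Lemma sign_fun_mul (R : realDomainType) (sg : R -> R) :
  (forall t, 0 < t -> sg t = 1) -> (forall t, t < 0 -> sg t = -1) ->
  forall t, sg t * t = `|t|.
Proof.
move=> sg_pos sg_neg t; case: (ltrgtP t 0) => [t0|t0|->].
- by rewrite sg_neg // ltr0_norm // mulN1r.
- by rewrite sg_pos // gtr0_norm // mul1r.
- by rewrite mulr0 normr0.
Qed.

Lemma sqnorm3_swap (R : realType) (a b c d : 'rV[R]_3) :
  sqnorm3 (a - d) + sqnorm3 (b - c)
  = sqnorm3 (a - c) + sqnorm3 (b - d) + 2 * dot3 (a - b) (c - d).
Proof. by rewrite /sqnorm3 /dot3 !big_ord_recr !big_ord0 /= !mxE; ring. Qed.

Lemma swap_cost_add_coupling (R : realType) (xb yb : nat -> 'rV[R]_3) s i :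
  `|s i| = 1 -> `|s i.+1| = 1 ->
  sqnorm3 (xpt xb yb s i - xpt xb yb s i.+1)
    + sqnorm3 (ypt xb yb s i - ypt xb yb s i.+1) + coupling (wgt xb yb) s i
  = sqnorm3 (xb i - xb i.+1) + sqnorm3 (yb i - yb i.+1) + wgt xb yb i.
Proof.
move=> /norm_eq1 si /norm_eq1 si1.
have := sqnorm3_swap (xb i) (yb i) (xb i.+1) (yb i.+1).
rewrite /xpt /ypt /coupling /wgt.
by case: si => ->; case: si1 => ->; rewrite ?eqxx ?eqNr ?oner_eq0 /=; lra.
Qed.

Lemma objective_add_coupling (R : realType) n (xb yb : nat -> 'rV[R]_3) s :
  signs_on 1 n s ->
  objective n xb yb s + \sum_(1 <= i < n) coupling (wgt xb yb) s i
  = \sum_(1 <= i < n)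
      (sqnorm3 (xb i - xb i.+1) + sqnorm3 (yb i - yb i.+1) + wgt xb yb i).
Proof.
move=> s_sign; rewrite /objective -big_split /=; apply: eq_big_nat => i i1n.
by apply: swap_cost_add_coupling; apply: s_sign; lia.
Qed.

Section GreedySigns.
Variables (R : realType) (n : nat) (u : seq nat) (xb yb : nat -> 'rV[R]_3) (sg : R -> R).
Hypotheses (n_gt0 : (0 < n)%N) (u_neq0 : u != [::]) (u_sorted : sorted ltn u)
  (u_range : all (fun i => (1 <= i <= n)%N) u).
Local Notation L := (size u).
Local Notation ib := (brk n u).
Local Notation w := (wgt xb yb).

Lemma sum_brk_chunks (F : nat -> R) :
  \sum_(1 <= i < n) F i = \sum_(l < L.+1) \sum_(ib l <= i < ib l.+1) F i.
Proof.
have := big_nat_chunks L.+1 F (brk_homo n_gt0 u_range u_sorted).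
by rewrite (@brk_large _ _ L.+1) => // <-.
Qed.

Section Optimality.
Hypotheses (sg_norm : forall t, `|sg t| = 1) (sg_mul : forall t, sg t * t = `|t|).
Variable s : nat -> R.
Hypothesis s_constructed : constructed n u xb yb sg s.

Lemma constructed_brk l : (0 < l <= L)%N -> s (ib l) = 1.
Proof.
move: s_constructed => [[sL _] [_ mid]] /andP[l0 lL].
have [->//|lL'] := eqVneq l L.
by have [k [_ [_ []]]] := mid l ltac:(lia).
Qed.

Lemma constructed_chunk l : (l <= L)%N ->
  signs_on (ib l) (ib l.+1) s /\
  forall t, signs_on (ib l) (ib l.+1) t ->
    ((0 < l)%N -> t (ib l) = 1) -> ((l < L)%N -> t (ib l.+1) = 1) ->
    \sum_(ib l <= i < ib l.+1) coupling w t i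
      <= \sum_(ib l <= i < ib l.+1) coupling w s i.
Proof.
move: s_constructed => [[sL fwL] [[s1 bw0] mid]] lL.
have L_gt0 : (0 < L)%N by case: u u_neq0.
have [->|lL'] := eqVneq l L.
  have sgL : `|s (ib L)| = 1 by rewrite sL normr1.
  split; first exact: (forward_rule_signs (w := w) sg_norm sgL fwL).
  move=> t t_sign _ _.
  by rewrite (sum_coupling_forward (w := w) sg_norm sg_mul sgL fwL) sum_coupling_le.
have [->|l0] := eqVneq l 0%N.
  have sg1 : `|s (ib 1)| = 1 by rewrite s1 normr1.
  split; first exact: (backward_rule_signs (w := w) sg_norm sg1 bw0).
  move=> t t_sign _ _.
  by rewrite (sum_coupling_backward (w := w) sg_norm sg_mul sg1 bw0) sum_coupling_le.
have [k [kl [kmin [sl [fw [sl1 bw]]]]]] := mid l ltac:(lia).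
split; first exact: (middle_chunk_signs (w := w) sg_norm kl sl fw sl1 bw).
move=> t t_sign tl tl1.
apply: (middle_chunk_optimal (w := w) sg_norm sg_mul kl kmin sl fw sl1 bw t_sign).
  by apply: tl; lia.
by apply: tl1; lia.
Qed.

Lemma constructed_signs : signs_on 1 n s.
Proof.
move=> i i1n; have [|l lL /andP[li il]] := @nat_chunk_cover ib L i.
  by rewrite (@brk_large _ _ L.+1).
by have [s_sign _] := constructed_chunk lL; apply: s_sign; rewrite li il.
Qed.

Lemma constructed_feasible : feasible n u s.
Proof.
split=> [i /constructed_signs /norm_eq1 //|x /(brk_of_mem n) [l lL ->]].
exact: constructed_brk.
Qed.

Lemma constructed_optimal t :
  feasible n u t -> objective n xb yb s <= objective n xb yb t.
Proof.
move=> [t_pm t_u]; have t_sign : signs_on 1 n t by move=> i /t_pm /norm_eq1.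
have := objective_add_coupling xb yb constructed_signs.
have := objective_add_coupling xb yb t_sign.
suff : \sum_(1 <= i < n) coupling w t i <= \sum_(1 <= i < n) coupling w s i by lra.
rewrite !sum_brk_chunks; apply: ler_sum => l _; have lL : (l <= L)%N by rewrite -ltnS.
have [_ opt] := constructed_chunk lL; apply: opt => [j /andP[lj jl]||].
- apply: t_sign; have := brk_range n_gt0 u_range l.
  by have := brk_range n_gt0 u_range l.+1; lia.
- by move=> l0; apply/t_u/brk_mem; lia.
- by move=> l1; apply/t_u/brk_mem; lia.
Qed.

End Optimality.

Definition min_weight_index l := argmin_nat (fun j => `|w j|) (ib l) (ib l.+1).

Lemma min_weight_indexP l : (0 < l < L)%N ->
  (ib l <= min_weight_index l < ib l.+1)%N /\
  forall j, (ib l <= j < ib l.+1)%N -> `|w (min_weight_index l)| <= `|w j|.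
Proof. by move=> lL; apply: argmin_natP; apply: brk_lt. Qed.

Definition chunk_sign l i :=
  if (0 < l)%N && ((l == L) || (i <= min_weight_index l)%N)
  then sgprod sg w (ib l) i else sgprod sg w i (ib l.+1).

(* [find (fun x => i < x) u] counts the breakpoints <= i, i.e. it is the
   chunk whose half-open range [i_l, i_(l+1)) contains i. *)
Definition greedy_sign i := chunk_sign (find (fun x => i < x)%N u) i.

Lemma chunk_sign_forward l i : (0 < l)%N -> l = L \/ (i <= min_weight_index l)%N ->
  chunk_sign l i = sgprod sg w (ib l) i.
Proof.
by move=> l0 h; rewrite /chunk_sign l0; case: h => [->|->]; rewrite ?eqxx ?orbT.
Qed.

Lemma chunk_sign_backward l i : l = 0%N \/ (l < L)%N /\ (min_weight_index l < i)%N ->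
  chunk_sign l i = sgprod sg w i (ib l.+1).
Proof.
by rewrite /chunk_sign => -[->//|[lL ki]]; rewrite ltn_eqF // (leqNgt i) ki /= andbF.
Qed.

Lemma chunk_sign_left l : (0 < l <= L)%N -> chunk_sign l (ib l) = 1.
Proof.
move=> /andP[l0 lL]; rewrite chunk_sign_forward ?sgprod_empty //.
have [->|lL'] := eqVneq l L; [by left | right].
by have [/andP[] //] := min_weight_indexP (l := l) ltac:(lia).
Qed.

Lemma chunk_sign_right l : (l < L)%N -> chunk_sign l (ib l.+1) = 1.
Proof.
move=> lL; rewrite chunk_sign_backward ?sgprod_empty //.
have [->|l0] := eqVneq l 0%N; [by left | right].
by have [/andP[] //] := min_weight_indexP (l := l) ltac:(lia).
Qed.

Lemma greedy_signE l i : (l <= L)%N -> ((0 < l)%N -> (ib l <= i)%N) ->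
  ((l < L)%N -> (i <= ib l.+1)%N) -> greedy_sign i = chunk_sign l i.
Proof.
move=> lL li il; rewrite /greedy_sign.
have [/andP[lL' /eqP ->]|not_end] := boolP ((l < L)%N && (i == ib l.+1)).
  rewrite (find_brk n_gt0 u_range u_sorted (l := l.+1)) //.
    by rewrite chunk_sign_left ?chunk_sign_right //; lia.
  by move=> lL2; apply: brk_lt; lia.
rewrite (find_brk n_gt0 u_range u_sorted (l := l)) // => lL'.
by have := il lL'; move: not_end; rewrite lL' /=; lia.
Qed.

Lemma greedy_sign_constructed : constructed n u xb yb sg greedy_sign.
Proof.
have L_gt0 : (0 < L)%N by case: u u_neq0.
have g_last i : (ib L <= i)%N -> greedy_sign i = sgprod sg w (ib L) i.
  move=> Li; rewrite (greedy_signE (leqnn L) (fun _ => Li)) ?ltnn //.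
  by apply: chunk_sign_forward => //; left.
have g_first i : (i <= ib 1)%N -> greedy_sign i = sgprod sg w i (ib 1).
  by move=> i1; rewrite (greedy_signE (l := 0) (leq0n L)).
have g_fw l i : (0 < l < L)%N -> (ib l <= i <= min_weight_index l)%N ->
    greedy_sign i = sgprod sg w (ib l) i.
  move=> lL /andP[li ik]; have [/andP[_ kl] _] := min_weight_indexP lL.
  have il : (i <= ib l.+1)%N by lia.
  rewrite (greedy_signE (ltnW (proj2 (andP lL))) (fun _ => li) (fun _ => il)).
  by apply: chunk_sign_forward; [lia | right].
have g_bw l i : (0 < l < L)%N -> (min_weight_index l < i <= ib l.+1)%N ->
    greedy_sign i = sgprod sg w i (ib l.+1).
  move=> lL /andP[ki il]; have [/andP[lk _] _] := min_weight_indexP lL.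
  have li : (ib l <= i)%N by lia.
  rewrite (greedy_signE (ltnW (proj2 (andP lL))) (fun _ => li) (fun _ => il)).
  by apply: chunk_sign_backward; right; split => //; lia.
split; [split | split; [split|]].
- by rewrite g_last ?sgprod_empty.
- by move=> i /andP[Li _]; rewrite !g_last ?(sgprodSr sg w Li) //; lia.
- by rewrite g_first ?sgprod_empty.
- by move=> i /andP[_ i1]; rewrite !g_first ?(sgprodSl sg w i1) //; lia.
move=> l lL; have [/andP[lk kl] kmin] := min_weight_indexP lL.
exists (min_weight_index l); split; first by rewrite lk kl.
split=> //; split; first by rewrite (g_fw l) ?sgprod_empty ?leqnn.
split; first by move=> i /andP[li ik]; rewrite !(g_fw l) ?(sgprodSr sg w li) //; lia.
split; first by rewrite (g_bw l) ?sgprod_empty ?leqnn //; lia.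
by move=> i /andP[ki il]; rewrite !(g_bw l) ?(sgprodSl sg w il) //; lia.
Qed.

End GreedySigns.

Theorem lemma4p1 (R : realType) (n : nat) (u : seq nat)
    (xb yb : nat -> 'rV[R]_3) (sg : R -> R) :
  (2 <= n)%N ->
  u != [::] ->
  sorted ltn u ->
  all (fun i => (1 <= i <= n)%N) u ->
  (forall t : R, 0 < t -> sg t = 1) ->
  (forall t : R, t < 0 -> sg t = -1) ->
  (sg 0 = 1 \/ sg 0 = -1) ->
  (exists s, constructed n u xb yb sg s) /\
  (forall s, constructed n u xb yb sg s ->
     feasible n u s /\
     forall t, feasible n u t -> objective n xb yb s <= objective n xb yb t).
Proof.
move=> n2 u_neq0 u_sorted u_range sg_pos sg_neg sg0.
have n_gt0 : (0 < n)%N by apply: leq_trans n2.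
have sg_norm := sign_fun_norm sg_pos sg_neg sg0.
have sg_mul := sign_fun_mul sg_pos sg_neg.
split.
  exists (greedy_sign n u xb yb sg).
  exact: greedy_sign_constructed n_gt0 u_neq0 u_sorted u_range.
move=> s s_constructed; split.
  exact: (constructed_feasible (R := R) n_gt0 u_neq0 u_sorted u_range
            sg_norm sg_mul s_constructed).
exact: (constructed_optimal (R := R) n_gt0 u_neq0 u_sorted u_range
          sg_norm sg_mul s_constructed).
Qed.
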